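(* Let $A_n=S_n\wr \mathrm{Aut}(\mathcal{T}_d)$ with the cloning maps $\kappa_k^n$ described in the context, and let $\mathscr{T}(S_*\wr\mathrm{Aut}(\mathcal{T}_d))$ be the set of equivalence classes $[T_-,f,T_+]$ of triples described in the context, with the multiplication described there. Then $\mathscr{T}(S_*\wr\mathrm{Aut}(\mathcal{T}_d))$ is a group, and the map $[T_-,f,T_+]\mapsto ((T_-,f,T_+))$ is a well-defined group isomorphism $\mathscr{T}(S_*\wr\mathrm{Aut}(\mathcal{T}_d))\cong \mathrm{AAut}(\mathcal{T}_d)$.
   Context: Fix $d\ge 2$ and the alphabet $X=\{1,\dots,d\}$; $\mathcal{T}_d$ is the infinite rooted $d$-ary tree with vertex set the set $X^*$ of finite words (root the empty word, $u$ adjacent to $ux$ for $x\in X$), and $\partial\mathcal{T}_d$ its boundary (infinite words). Permutations act on the left, and $\sigma\tau$ means first $\tau$ then $\sigma$. For a group $G$, $S_n\wr G=S_n\ltimes G^n$ with elements written $\sigma(g_1,\dots,g_n)$ and multiplication $\sigma(f_1,\dots,f_n)\,\tau(g_1,\dots,g_n)=\sigma\tau(f_{\tau(1)}g_1,\dots,f_{\tau(n)}g_n)$. Every $f\in\mathrm{Aut}(\mathcal{T}_d)$ has a unique wreath recursion $f=\rho(f)(f_1,\dots,f_d)$, where $\rho(f)\in S_d$ and $f_x\in\mathrm{Aut}(\mathcal{T}_d)$ (the state of $f$ at $x$) satisfy $f(xw)=\rho(f)(x)\,f_x(w)$ for $x\in X$, $w\in X^*$. Almost-automorphisms: a finite rooted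 complete subtree of $\mathcal{T}_d$ is a finite subtree containing the root in which each vertex has either $0$ or all $d$ of its children; its leaves are ordered left to right (lexicographically). If $T_-,T_+$ are such subtrees each with $n$ leaves ($u_1,\dots,u_n$ the leaves of $T_-$, $v_1,\dots,v_n$ those of $T_+$), $\sigma\in S_n$, $f_i\in\mathrm{Aut}(\mathcal{T}_d)$, then $((T_-,\sigma(f_1,\dots,f_n),T_+))$ denotes the homeomorphism of $\partial\mathcal{T}_d$ sending $v_iw\mapsto u_{\sigma(i)}f_i(w)$. $\mathrm{AAut}(\mathcal{T}_d)$ is the group of all such homeomorphisms. Symmetric cloning maps: for $1\le k\le n$ and $\sigma\in S_n$, $(\sigma)\varsigma_k^n\in S_{n+d-1}$ is defined by: for $i<k$, $i\mapsto\sigma(i)$ if $\sigma(i)<\sigma(k)$ and $i\mapsto\sigma(i)+d-1$ if $\sigma(i)>\sigma(k)$; for $k\le i\le k+d-1$, $i\mapsto \sigma(k)+i-k$; for $i>k+d-1$, $i\mapsto\sigma(i-d+1)$ if $\sigma(i-d+1)<\sigma(k)$ and $i\mapsto \sigma(i-d+1)+d-1$ if $\sigma(i-d+1)>\sigma(k)$. For $\tau\in S_d$ let $\tau^{(k)}\in S_{n+d-1}$ be the permutation sending $k+j-1\mapsto k+\tau(j)-1$ for $1\le j\le d$ and fixing all other points. Define $\rho_n(\sigma(f_1,\dots,f_n))=\sigma$ and $\kappa_k^n:A_n\to A_{n+d-1}$ by $(\sigma(f_1,\dots,f_n))\kappa_k^n=(\sigma)\varsigma_k^n\,\rho(f_k)^{(k)}\,(f_1,\dots,f_{k-1},f_k^1,\dots,f_k^d,f_{k+1},\dots,f_n)$,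 where $f_k=\rho(f_k)(f_k^1,\dots,f_k^d)$ is the wreath recursion. Thompson group $\mathscr{T}(S_*\wr G)$ for $G\le\mathrm{Aut}(\mathcal{T}_d)$ with $\kappa_k^n(S_n\wr G)\subseteq S_{n+d-1}\wr G$: consider triples $(T_-,g,T_+)$ with $T_\pm$ finite rooted complete subtrees of $\mathcal{T}_d$ with the same number $n$ of leaves and $g\in S_n\wr G$. An expansion of $(T_-,g,T_+)$ is $(T_-',(g)\kappa_k^n,T_+')$ where $T_+'$ is $T_+$ with a $d$-caret (the $d$ children) added at its $k$th leaf and $T_-'$ is $T_-$ with a $d$-caret added at its $\rho_n(g)(k)$th leaf; reductions are the inverses. $[T_-,g,T_+]$ denotes the class under the equivalence relation generated by expansions. The product of two classes is computed by choosing representatives $(T_-,f,T_+)$, $(U_-,g,U_+)$ with $T_+=U_-$ (always possible by expanding) and setting $[T_-,f,T_+][U_-,g,U_+]=[T_-,fg,U_+]$. *)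

From HB Require Import structures.
From mathcomp Require Import all_boot all_order all_fingroup.
From Stdlib Require Import Relations.
Set Implicit Arguments. Unset Strict Implicit. Unset Printing Implicit Defensive.

(* Conventions: the alphabet X = {1,...,d} is represented by 'I_d = {0,...,d-1};
   leaves / positions are indexed from 0 (i.e. index i here is index i+1 in the paper).
   Words: seq 'I_d, first letter next to the root; the children of u are rcons u x. *)

Section Defs.
Variable d : nat.

Definition word := seq 'I_d.

Definition adj (u v : word) : Prop :=
  (exists x, v = rcons u x) \/ (exists x, u = rcons v x).

Definition is_aut (f : word -> word) : Prop :=
  bijective f /\ forall u v, adj u v <-> adj (f u) (f v).

(* wreath recursion f = rho(f)(f_1,...,f_d):  f (x w) = rho f x :: state f x w *)
Definition rho (f : word -> word) (x : 'I_d) : 'I_d := head x (f [:: x]).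
Definition state (f : word -> word) (x : 'I_d) : word -> word :=
  fun w => behead (f (x :: w)).

(* action of an automorphism on the boundary (infinite words) *)
Definition bdry := nat -> 'I_d.
Definition aut_bd (f : word -> word) (xi : bdry) : bdry :=
  fun m => nth (xi m) (f (mkseq xi m.+1)) m.

Inductive dtree := Lf | Nd of dtree ^ d.

(* leaves, ordered left to right (lexicographically) *)
Fixpoint leaves (t : dtree) : seq word :=
  match t with
  | Lf => [:: [::]]
  | Nd f => flatten (codom [ffun x : 'I_d => map (cons x) (leaves (f x))])
  end.

Fixpoint graft (t : dtree) (u : word) : dtree :=
  match t, u with
  | Lf, [::] => Nd [ffun _ => Lf]
  | Nd f, x :: u' => Nd [ffun y => if y == x then graft (f y) u' else f y]
  | _, _ => t
  end.

Definition add_caret (t : dtree) (k : nat) : dtree := graft t (nth [::] (leaves t) k).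

Definition mkperm n (g : 'I_n -> 'I_n) : {perm 'I_n} :=
  match injectiveP g with ReflectT H => perm H | ReflectF _ => 1%g end.
Definition mkperm_nat n (g : nat -> nat) : {perm 'I_n} :=
  mkperm (fun i : 'I_n => insubd i (g i)).
Definition pnat n (s : {perm 'I_n}) (j : nat) : nat :=
  if (insub j : option 'I_n) is Some x then val (s x) else j.
Definition fnat n (fs : 'I_n -> word -> word) (j : nat) : word -> word :=
  if (insub j : option 'I_n) is Some x then fs x else id.
Definition rho_nat (f : word -> word) (j : nat) : nat :=
  if (insub j : option 'I_d) is Some x then val (rho f x) else j.
Definition state_nat (f : word -> word) (j : nat) : word -> word :=
  if (insub j : option 'I_d) is Some x then state f x else id.

(* ---------- triples (T_-, sigma(f_1,...,f_n), T_+) ---------- *)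
Record triple := Triple {
  tm : dtree; tp : dtree; tn : nat;
  tperm : {perm 'I_tn};
  tfs : 'I_tn -> word -> word }.
Arguments tperm : clear implicits.
Arguments tfs : clear implicits.
Arguments Triple : clear implicits.

Definition valid (t : triple) : Prop :=
  size (leaves (tm t)) = tn t /\ size (leaves (tp t)) = tn t /\
  forall i, is_aut (tfs t i).

Definition clone_nat (s : nat -> nat) (k i : nat) : nat :=
  let adjv j := if s j < s k then s j else s j + d.-1 in
  if i < k then adjv i
  else if i < k + d then s k + (i - k)
  else adjv (i - d.-1).

Definition block_nat (tau : nat -> nat) (k i : nat) : nat :=
  if (k <= i) && (i < k + d) then k + tau (i - k) else i.

Definition expand (t : triple) (k : 'I_(tn t)) : triple :=
  let s := pnat (tperm t) in
  let fk := tfs t k in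
  Triple (add_caret (tm t) (val (tperm t k))) (add_caret (tp t) k) (tn t + d.-1)
    (* paper: (sigma)varsigma_k * rho(f_k)^{(k)}, i.e. first rho^{(k)} then varsigma *)
    (mkperm_nat (tn t + d.-1) (fun i => clone_nat s k (block_nat (rho_nat fk) k i)))
    (fun i => if i < k then fnat (tfs t) i
              else if i < k + d then state_nat fk (i - k)
              else fnat (tfs t) (i - d.-1)).

Arguments expand : clear implicits.
Definition expands (t t' : triple) : Prop :=
  valid t /\ exists k : 'I_(tn t), t' = expand t k.

Definition tequiv : triple -> triple -> Prop := clos_refl_sym_trans triple expands.

(* product of representatives with tp t = tm u : [T_-, f g, U_+],
   where sigma(f) tau(g) = sigma tau (f_{tau(i)} g_i) *)
Definition tmul (t u : triple) : triple :=
  Triple (tm t) (tp u) (tn u)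
    (mkperm_nat (tn u) (fun i => pnat (tperm t) (pnat (tperm u) i)))
    (fun i => fnat (tfs t) (pnat (tperm u) i) \o tfs u i).

Definition ident (T : dtree) : triple :=
  Triple T T (size (leaves T)) 1%g (fun _ => id).

Definition aa (t : triple) (xi : bdry) : bdry :=
  let L := leaves (tp t) in
  let i := find (fun v => v == mkseq xi (size v)) L in
  match (insub i : option 'I_(tn t)) with
  | Some j =>
      let v := nth [::] L i in
      let u := nth [::] (leaves (tm t)) (val (tperm t j)) in
      let fw := aut_bd (tfs t j) (fun m => xi (size v + m)) in
      fun m => if m < size u then nth (xi m) u m else fw (m - size u)
  | None => xi
  end.

Definition is_AAut (h : bdry -> bdry) : Prop :=
  exists t, valid t /\ forall xi, h xi =1 aa t xi.

End Defs.

Arguments tequiv {d}.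
Arguments expands {d}.

From Pilot Require Import Defs.
From HB Require Import structures.
From mathcomp Require Import all_boot all_order all_fingroup.
From Stdlib Require Import Relations.
From mathcomp Require Import zify.
From Stdlib Require Import FunctionalExtensionality ClassicalEpsilon.
Set Implicit Arguments. Unset Strict Implicit. Unset Printing Implicit Defensive.

(* Evaluating a triple as a boundary map, [t |-> ((T_-, f, T_+))], is
   invariant under expansion (the caret added at the k-th leaf of T_+ is sent
   by f_k onto the caret at the sigma(k)-th leaf of T_-, permuted by rho(f_k),
   with states f_k^x below), and it turns the product of composable triples
   into composition.  It is also injective on classes: two triples can be
   expanded to triples with a common top tree T_+, and if these define the same
   boundary map they coincide, because for d >= 2 a map [v w |-> u f(w)] on the
   cone below a leaf v determines both the word u and the automorphism f.
   Every group law for classes thus follows from the corresponding identity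
   between boundary maps, and surjectivity onto AAut(T_d) is its definition. *)

Section Automorphisms.
Variable d : nat.
Local Notation word := (word d).

Lemma aut_id : is_aut (@id word).
Proof. by split; [exists id|]. Qed.

Lemma aut_comp (f g : word -> word) : is_aut f -> is_aut g -> is_aut (f \o g).
Proof.
move=> [[f' a b] Hf] [[g' c e] Hg]; split.
  by exists (g' \o f') => x /=; [rewrite a c|rewrite e b].
by move=> u v /=; rewrite Hg Hf.
Qed.

Lemma aut_inverse (f : word -> word) :
  is_aut f -> exists g, [/\ is_aut g, cancel f g & cancel g f].
Proof.
move=> [[g fg gf] H]; exists g; split=> //; split; first by exists f.
by move=> u v; rewrite (H (g u)) !gf.
Qed.

Definition neighbours (u : word) : seq word :=
  map (rcons u) (enum 'I_d) ++ (if u is a :: u' then [:: belast a u'] else [::]).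

Lemma neighbours_adj u v : v \in neighbours u -> adj u v.
Proof.
rewrite mem_cat => /orP [/mapP [x _ ->]|]; first by left; exists x.
case: u => [|a u] //=; rewrite inE => /eqP ->; right.
by exists (last a u); rewrite -lastI.
Qed.

Lemma uniq_neighbours u : u != [::] -> uniq (neighbours u).
Proof.
case: u => [|a u] // _; rewrite cat_uniq /= andbT orbF.
rewrite map_inj_uniq ?enum_uniq /=; last by move=> x y [] /rcons_inj [].

apply/mapP => -[x _ /(congr1 size)]; rewrite size_belast /= size_rcons; lia.
Qed.

Lemma size_neighbours u : u != [::] -> size (neighbours u) = d.+1.
Proof. by case: u => [|a u] // _; rewrite size_cat size_map size_enum_ord addn1. Qed.

(* The root is the only vertex with d (rather than d + 1) neighbours. *)
Lemma aut_root (f : word -> word) : is_aut f -> f [::] = [::].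
Proof.
move=> [[g fg gf] H]; apply/eqP; apply/negPn/negP => hne.
have: size (neighbours (f [::])) <= size (map f (map (fun x : 'I_d => [:: x]) (enum 'I_d))).
  apply: uniq_leq_size; first exact: uniq_neighbours.
  move=> w /neighbours_adj; rewrite -{1}(gf w) -H => -[[x hx]|[x]].
    apply/mapP; exists [:: x]; last by rewrite -(gf w) hx.
    by apply/mapP; exists x; rewrite ?mem_enum.
  by case: (g w).
by rewrite size_neighbours // !size_map -enumT size_enum_ord ltnn.
Qed.

Lemma aut_child (f : word -> word) u x : is_aut f -> exists y, f (rcons u x) = rcons (f u) y.
Proof.
move=> Ha; have Hr := aut_root Ha; move: Ha => [[g fg gf] H].
elim/last_ind: u x => [|u x' IH] x.
  have: adj [::] (rcons [::] x) by left; exists x.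
  rewrite H Hr => -[[y hy]|[y hy]]; first by exists y.
  by case: (f [:: x]) hy.
have: adj (rcons u x') (rcons (rcons u x') x) by left; exists x.
rewrite H => -[[y hy]|[y hy]]; first by exists y.
case: (IH x') => y' hy'; move: hy; rewrite hy' => /rcons_inj [] /(can_inj fg) hh _.
by move: (congr1 size hh); rewrite !size_rcons; lia.
Qed.

Lemma aut_size (f : word -> word) u : is_aut f -> size (f u) = size u.
Proof.
move=> Ha; elim/last_ind: u => [|u x IH]; first by rewrite aut_root.
by case: (aut_child u x Ha) => y ->; rewrite !size_rcons IH.
Qed.

Lemma aut_take (f : word -> word) w n : is_aut f -> f (take n w) = take n (f w).
Proof.
move=> Ha.
suff H v u : take (size u) (f (u ++ v)) = f u.
  case: (leqP (size w) n) => hn; first by rewrite !take_oversize // aut_size.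
  by rewrite -{2}(cat_take_drop n w) -(H (drop n w) (take n w)) size_take hn.
elim/last_ind: v u => [|v x IH] u; first by rewrite cats0 take_oversize // aut_size.
rewrite -rcons_cat; case: (aut_child (u ++ v) x Ha) => y ->.
rewrite -cats1 take_cat aut_size // size_cat.
case: ltnP => h; first by rewrite IH.
have v0 : v = [::] by apply/size0nil; lia.
by rewrite v0 /= !addn0 subnn take0 !cats0.
Qed.

Lemma aut_cons (f : word -> word) x w : is_aut f -> f (x :: w) = rho f x :: state f x w.
Proof.
move=> Ha; have := aut_take (x :: w) 1 Ha; rewrite /= take0.
have := aut_size [:: x] Ha; rewrite /rho /state.
by case: (f [:: x]) => [|a [|]] //= _; case: (f (x :: w)) => [|b s] //= [->].
Qed.

Lemma adj_cons x (u v : word) : adj u v <-> adj (x :: u) (x :: v).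
Proof.
split; first by case=> -[z ->]; [left|right]; exists z.
by case=> -[z [hz]]; [left|right]; exists z.
Qed.

Lemma aut_state (f : word -> word) x : is_aut f -> is_aut (state f x).
Proof.
move=> Ha; case: (aut_inverse Ha) => g [Hg fg gf].
have grf : rho g (rho f x) = x.
  by have := fg [:: x]; rewrite (aut_cons _ _ Ha) (aut_cons _ _ Hg) => -[].
split.
  exists (state g (rho f x)) => w.
    by rewrite {1}/state -[rho f x :: _](aut_cons _ _ Ha) fg.
  by rewrite {1}/state -{1}grf -[rho g _ :: _](aut_cons _ _ Hg) gf.
move=> u v; rewrite (adj_cons x) Ha.2 !aut_cons //.
by symmetry; apply: adj_cons.
Qed.

Lemma aut_single (f : word -> word) x : is_aut f -> f [:: x] = [:: rho f x].
Proof.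
move=> Ha; rewrite aut_cons //; congr (_ :: _).
by apply/size0nil; rewrite aut_size //; apply: aut_state.
Qed.

Lemma aut_rho_inj (f : word -> word) : is_aut f -> injective (rho f).
Proof.
move=> Ha x y e; have [[g fg _] _] := Ha.
by have := fg [:: x]; rewrite aut_single // e -aut_single // fg => -[].
Qed.
End Automorphisms.

Section Boundary.
Variable d : nat.
Local Notation word := (word d).
Local Notation bdry := (bdry d).

Definition catb (u : word) (e : bdry) : bdry :=
  fun m => if m < size u then nth (e 0) u m else e (m - size u).
Definition shift (e : bdry) n : bdry := fun m => e (n + m).
Definition pref (v : word) (xi : bdry) : bool := v == mkseq xi (size v).

Lemma pref_catb v e : pref v (catb v e).
Proof.
apply/eqP; apply: (@eq_from_nth _ (e 0)); first by rewrite size_mkseq.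
by move=> i hi; rewrite nth_mkseq // /catb hi.
Qed.

Lemma shift_catb v e : shift (catb v e) (size v) = e.
Proof.
apply: functional_extensionality => m; rewrite /shift /catb.
by rewrite ltnNge leq_addr /= addKn.
Qed.

Lemma catb_shift v xi : pref v xi -> catb v (shift xi (size v)) = xi.
Proof.
move/eqP => hv; apply: functional_extensionality => m; rewrite /shift /catb.
case: ltnP => h; last by rewrite subnKC.
by rewrite hv nth_mkseq // size_mkseq.
Qed.

Lemma mkseq_catb u e : mkseq (catb u e) (size u) = u.
Proof. by apply/esym/eqP; apply: pref_catb. Qed.

Lemma catb_cat u v e : catb u (catb v e) = catb (u ++ v) e.
Proof.
apply: functional_extensionality => m; rewrite /catb size_cat.
case: ltnP => h1.
  by rewrite ltn_addr // nth_cat h1; exact: set_nth_default.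
rewrite nth_cat (ltnNge m (size u)) h1 /= -(ltn_subLR _ h1).
by case: ltnP => h2 //; rewrite subnDA.
Qed.

Lemma pref_take u e w : size w <= size u -> pref w (catb u e) -> w = take (size w) u.
Proof.
move=> hs /eqP hw; apply: (@eq_from_nth _ (e 0)); first by rewrite size_takel.
by move=> i hi; rewrite nth_take // {1}hw nth_mkseq // /catb (leq_trans hi hs).
Qed.

Lemma mkseqS1 (xi : bdry) n : mkseq xi n.+1 = xi 0 :: mkseq (shift xi 1) n.
Proof. by rewrite /mkseq /shift /= -[1 in LHS]addn0 iotaDl -map_comp. Qed.

Lemma pref_rcons (v : word) xi : pref v xi -> pref (rcons v (xi (size v))) xi.
Proof.
move=> /eqP hv; apply/eqP; rewrite size_rcons {1}hv.
by rewrite /mkseq -addn1 iotaD map_cat /= cats1.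
Qed.

Lemma mkseq_aut_bd (f : word -> word) e n : is_aut f ->
  mkseq (aut_bd f e) n = f (mkseq e n).
Proof.
move=> Ha; apply: (@eq_from_nth _ (e 0)); first by rewrite size_mkseq aut_size // size_mkseq.
rewrite size_mkseq => i hi; rewrite nth_mkseq // /aut_bd.
have -> : mkseq e i.+1 = take i.+1 (mkseq e n).
  apply: (@eq_from_nth _ (e 0)); first by rewrite size_takel size_mkseq.
  by rewrite size_mkseq => j hj; rewrite nth_take // !nth_mkseq //; lia.
rewrite aut_take // nth_take //; apply: set_nth_default.
by rewrite aut_size // size_mkseq.
Qed.

Lemma aut_bd_comp (f g : word -> word) e : is_aut f -> is_aut g ->
  aut_bd f (aut_bd g e) = aut_bd (f \o g) e.
Proof.
move=> Hf Hg; apply: functional_extensionality => m.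
rewrite {1}/aut_bd mkseq_aut_bd //= /aut_bd; apply: set_nth_default.
by rewrite (aut_size _ Hf) (aut_size _ Hg) size_mkseq.
Qed.

Lemma aut_bd_id (e : bdry) : aut_bd id e = e.
Proof. by apply: functional_extensionality => m; rewrite /aut_bd nth_mkseq. Qed.

Lemma aut_bd_cons (f : word -> word) e : is_aut f ->
  aut_bd f e = catb [:: rho f (e 0)] (aut_bd (state f (e 0)) (shift e 1)).
Proof.
move=> Ha; apply: functional_extensionality => -[|m]; first by rewrite /aut_bd /= aut_single.
by rewrite /catb /= subn1 /aut_bd mkseqS1 aut_cons.
Qed.

Hypothesis d_gt1 : 1 < d.

(* As d >= 2, a point below u' can avoid the letter of the longer word u at
   position [size u']. *)
Lemma catb_aut_bd_size (u u' : word) (f f' : word -> word) : is_aut f -> is_aut f' ->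
  (forall e, catb u (aut_bd f e) = catb u' (aut_bd f' e)) -> size u <= size u'.
Proof.
move=> Hf Hf' H; rewrite leqNgt; apply/negP => hlt.
have y0 : 'I_d by exists 0; lia.
set y := nth y0 u (size u').
pose z : 'I_d := if nat_of_ord y == 0 then Ordinal d_gt1 else Ordinal (ltnW d_gt1).
have hz : z != y.
  by rewrite /z; case: (nat_of_ord y =P 0) => h; apply/eqP => /(congr1 val) /=; lia.
have [w0 hw0] : exists w0, f' [:: w0] = [:: z].
  by case: (aut_inverse Hf') => g [Hg _ gf]; exists (rho g z); rewrite -aut_single // gf.
have := congr1 (fun h => h (size u')) (H (fun _ => w0)).
rewrite /catb hlt ltnn subnn /aut_bd /= hw0 /= => hy.
by move: hz; rewrite -hy (set_nth_default y0) // eqxx.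
Qed.

Lemma catb_aut_bd_inj (u u' : word) (f f' : word -> word) : is_aut f -> is_aut f' ->
  (forall e, catb u (aut_bd f e) = catb u' (aut_bd f' e)) -> u = u' /\ f =1 f'.
Proof.
move=> Hf Hf' H.
have hs : size u = size u'.
  apply/eqP; rewrite eqn_leq (catb_aut_bd_size Hf Hf' H).
  exact: (catb_aut_bd_size Hf' Hf (fun e => esym (H e))).
have eu : u = u'.
  case: u H hs => [|a u] H hs; first by case: u' {H} hs.
  have := pref_catb (a :: u) (aut_bd f (fun _ => a)); rewrite H => /(pref_take (eq_leq hs)).
  by rewrite hs take_size.
split => // -[|a w]; first by rewrite !aut_root.
rewrite -[a :: w](mkseq_catb _ (fun _ => a)) -(mkseq_aut_bd _ _ Hf) -(mkseq_aut_bd _ _ Hf').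
congr mkseq; move: (H (catb (a :: w) (fun _ => a))); rewrite -eu.
by move=> /(congr1 (fun h => shift h (size u))); rewrite !shift_catb.
Qed.
End Boundary.

Section Leaves.
Variable d : nat.
Local Notation word := (word d).
Local Notation bdry := (bdry d).
Local Notation dtree := (dtree d).

Fixpoint dtree_indf (P : dtree -> Prop) (HL : P (Lf d))
  (HN : forall f : {ffun 'I_d -> dtree}, (forall x, P (f x)) -> P (Nd f)) (t : dtree) : P t :=
  match t with
  | Lf => HL
  | Nd f => HN f (fun x => dtree_indf HL HN (f x))
  end.

Lemma leaves_Nd (f : {ffun 'I_d -> dtree}) :
  leaves (Nd f) = flatten [seq map (cons x) (leaves (f x)) | x <- enum 'I_d].
Proof. by rewrite /= codomE; congr flatten; apply: eq_map => x; rewrite ffunE. Qed.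

Lemma mem_leaves_Nd (f : {ffun 'I_d -> dtree}) x w :
  (x :: w \in leaves (Nd f)) = (w \in leaves (f x)).
Proof.
rewrite leaves_Nd; apply/flatten_mapP/idP; first by case=> y _ /mapP [w' hw' [-> ->]].
by move=> h; exists x; rewrite ?mem_enum // mem_map //; move=> a b [].
Qed.

Lemma nil_leaves_Nd (f : {ffun 'I_d -> dtree}) : ([::] \in leaves (Nd f)) = false.
Proof. by rewrite leaves_Nd; apply/flatten_mapP => -[y _ /mapP [w' _]]. Qed.

Lemma uniq_flatten_map (S T : eqType) (F : S -> seq T) (s : seq S) :
  uniq s -> (forall x, uniq (F x)) ->
  (forall x y z, z \in F x -> z \in F y -> x = y) -> uniq (flatten (map F s)).
Proof.
move=> us uF dis; elim: s us => [|a s IH] //= /andP [ha us].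
rewrite cat_uniq uF IH // andbT; apply/hasPn => z /flatten_mapP [y hy hz].
by apply/negP => hz'; move: ha; rewrite -(dis _ _ _ hz hz') hy.
Qed.

Lemma leaves_uniq (t : dtree) : uniq (leaves t).
Proof.
elim/dtree_indf: t => [|f IH] //; rewrite leaves_Nd.
apply: uniq_flatten_map; first exact: enum_uniq.
  by move=> x; rewrite map_inj_uniq //; move=> a b [].
by move=> x y z /mapP [a _ ->] /mapP [b _ []].
Qed.

Lemma leaves_inj (a b : dtree) : leaves a =i leaves b -> a = b.
Proof.
elim/dtree_indf: a b => [|f IH] [|g] h //; try by have := h [::]; rewrite nil_leaves_Nd inE eqxx.
congr Nd; apply/ffunP => x; apply: IH => w.
by rewrite -!mem_leaves_Nd h.
Qed.

Lemma leaves_pref_uniq (t : dtree) (xi : bdry) u v :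
  u \in leaves t -> v \in leaves t -> pref u xi -> pref v xi -> u = v.
Proof.
elim/dtree_indf: t xi u v => [|f IH] xi u v; first by rewrite !inE => /eqP -> /eqP ->.
case: u => [|x u]; first by rewrite nil_leaves_Nd.
case: v => [|y v]; first by rewrite nil_leaves_Nd.
rewrite !mem_leaves_Nd /pref /= !mkseqS1 => hu hv /eqP [ex hu'] /eqP [ey hv'].
by subst x y; congr cons; apply: (IH (xi 0) (shift xi 1)) => //; apply/eqP.
Qed.

Lemma leaves_has_pref (t : dtree) (xi : bdry) : has (fun v : word => pref v xi) (leaves t).
Proof.
elim/dtree_indf: t xi => [|f IH] xi //.
case/hasP: (IH (xi 0) (shift xi 1)) => w hw /eqP hp.
by apply/hasP; exists (xi 0 :: w); rewrite ?mem_leaves_Nd // /pref /= mkseqS1 -hp.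
Qed.

Lemma find_leaf (t : dtree) (xi : bdry) i :
  i < size (leaves t) -> pref (nth [::] (leaves t) i) xi ->
  find (fun v : word => pref v xi) (leaves t) = i.
Proof.
move=> hi hp; have hxi := leaves_has_pref t xi.
have hj : find (fun v : word => pref v xi) (leaves t) < size (leaves t) by rewrite -has_find.
have := leaves_pref_uniq (mem_nth _ hj) (mem_nth _ hi) (nth_find [::] hxi) hp.
by move/eqP; rewrite nth_uniq ?leaves_uniq // => /eqP.
Qed.

Definition split_leaf (u w : word) : seq word :=
  if w == u then map (rcons w) (enum 'I_d) else [:: w].

Lemma flatten_map_flatten (S T : Type) (F : S -> seq T) (ss : seq (seq S)) :
  flatten (map F (flatten ss)) = flatten (map (fun s => flatten (map F s)) ss).
Proof. by elim: ss => //= s ss IH; rewrite map_cat flatten_cat IH. Qed.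

Lemma leaves_graft (t : dtree) u : u \in leaves t ->
  leaves (graft t u) = flatten (map (split_leaf u) (leaves t)).
Proof.
elim/dtree_indf: t u => [|f IH] u.
  rewrite inE => /eqP ->; rewrite /= /split_leaf eqxx /= cats0 codomE.
  by rewrite (eq_map (g := fun x => [:: [:: x]])) ?flatten_map1 // => x; rewrite !ffunE.
case: u => [|x u]; first by rewrite nil_leaves_Nd.
rewrite mem_leaves_Nd => hu; rewrite [graft _ _]/= !leaves_Nd flatten_map_flatten.
congr flatten; rewrite -[in RHS]map_comp; apply: eq_map => y /=.
rewrite ffunE; case: eqP => [->|ne].
  rewrite IH // map_flatten -!map_comp; congr flatten; apply: eq_map => w /=.
  by rewrite /split_leaf eqseq_cons eqxx /=; case: eqP => // ->; rewrite -map_comp.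
rewrite -map_comp -[LHS]flatten_seq1 -map_comp; congr flatten; apply: eq_map => w /=.
by rewrite /split_leaf eqseq_cons; case: eqP.
Qed.

Lemma flatten_split_leaf_notin (u : word) (s : seq word) : u \notin s ->
  flatten (map (split_leaf u) s) = s.
Proof.
elim: s => //= w s IH; rewrite inE negb_or => /andP [h1 h2].
by rewrite /split_leaf eq_sym (negbTE h1) IH.
Qed.

Lemma leaves_add_caret (T : dtree) k : k < size (leaves T) ->
  leaves (add_caret T k) = take k (leaves T) ++
    map (rcons (nth [::] (leaves T) k)) (enum 'I_d) ++ drop k.+1 (leaves T).
Proof.
move=> hk; rewrite /add_caret leaves_graft ?mem_nth //.
set L := leaves T; set v := nth [::] L k.
have eL : L = take k L ++ v :: drop k.+1 L by rewrite -drop_nth // cat_take_drop.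
have := leaves_uniq T; rewrite -/L {1}eL cat_uniq /= => /and3P [_ /norP [nt _] /andP [nd _]].
rewrite {1}eL map_cat flatten_cat /= !flatten_split_leaf_notin //.
by rewrite /split_leaf eqxx.
Qed.

Section Caret.
Variables (T : dtree) (k : nat).
Hypothesis d_gt0 : 0 < d.
Hypothesis hk : k < size (leaves T).
Local Notation L := (leaves T).
Local Notation L' := (leaves (add_caret T k)).

Lemma size_add_caret : size L' = size L + d.-1.
Proof.
rewrite leaves_add_caret // !size_cat size_map size_enum_ord size_takel ?size_drop; lia.
Qed.

Lemma nth_add_caret_lt i : i < k -> nth [::] L' i = nth [::] L i.
Proof.
move=> hi; rewrite leaves_add_caret // nth_cat size_takel; last exact: ltnW.
by rewrite hi nth_take.
Qed.

Lemma nth_add_caret_mid (x : 'I_d) : nth [::] L' (k + x) = rcons (nth [::] L k) x.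
Proof.
rewrite leaves_add_caret // nth_cat size_takel; last exact: ltnW.
rewrite ltnNge leq_addr /= addKn nth_cat size_map size_enum_ord ltn_ord.
by rewrite (nth_map x) ?size_enum_ord // nth_ord_enum.
Qed.

Lemma nth_add_caret_gt i : k + d <= i -> nth [::] L' i = nth [::] L (i - d.-1).
Proof.
move=> hi; rewrite leaves_add_caret // nth_cat size_takel; last exact: ltnW.
have -> : i < k = false by lia.
rewrite nth_cat size_map size_enum_ord.
have -> : i - k < d = false by lia.
by rewrite nth_drop; congr nth; lia.
Qed.
End Caret.
End Leaves.

Section Triples.
Variable d : nat.
Local Notation word := (word d).
Local Notation dtree := (dtree d).
Local Notation triple := (triple d).
Local Notation tperm := Defs.tperm.
Local Notation tfs t := (@Defs.tfs _ t).

Lemma mkperm_natE n (g : nat -> nat) :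
  (forall i, i < n -> g i < n) ->
  (forall i j, i < n -> j < n -> g i = g j -> i = j) ->
  forall i : 'I_n, val (mkperm_nat n g i) = g i.
Proof.
move=> hr hi i; rewrite /mkperm_nat /mkperm.
have E (j : 'I_n) : val (insubd j (g j) : 'I_n) = g j by rewrite val_insubd hr.
case: injectiveP => H; first by rewrite permE E.
by case: H => a b /(congr1 val); rewrite !E => /hi h; apply/val_inj/h.
Qed.

Lemma pnat_val n (s : {perm 'I_n}) (i : 'I_n) : Defs.pnat s i = val (s i).
Proof. by rewrite /Defs.pnat valK. Qed.

Lemma pnat_ord n (s : {perm 'I_n}) j (hj : j < n) : Defs.pnat s j = s (Ordinal hj).
Proof. by rewrite /Defs.pnat insubT. Qed.

Lemma fnat_ord n (fs : 'I_n -> word -> word) j (hj : j < n) : fnat fs j = fs (Ordinal hj).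
Proof. by rewrite /fnat insubT. Qed.

Lemma pnat_ltn n (s : {perm 'I_n}) j : j < n -> Defs.pnat s j < n.
Proof. by move=> hj; rewrite (pnat_ord s hj). Qed.

Lemma pnat_inj n (s : {perm 'I_n}) a b : a < n -> b < n -> Defs.pnat s a = Defs.pnat s b -> a = b.
Proof. by move=> ha hb; rewrite (pnat_ord s ha) (pnat_ord s hb) => /val_inj /perm_inj []. Qed.

Lemma fnat_aut n (fs : 'I_n -> word -> word) j :
  (forall i, is_aut (fs i)) -> is_aut (fnat fs j).
Proof. by move=> H; rewrite /fnat; case: insubP => [x _ _|_]; [apply: H|apply: aut_id]. Qed.

Lemma state_nat_aut (f : word -> word) j : is_aut f -> is_aut (state_nat f j).
Proof.
by move=> H; rewrite /state_nat; case: insubP => [x _ _|_]; [apply: aut_state|apply: aut_id].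
Qed.

Lemma valid_ident (T : dtree) : valid (ident T).
Proof. by split => //; split => // i0; apply: aut_id. Qed.

Lemma valid_tmul (t u : triple) : valid t -> valid u -> tp t = tm u -> valid (tmul t u).
Proof.
move=> [a1 [a2 a3]] [b1 [b2 b3]] e; split; first by rewrite /= -b1 -e a2 a1.
by split => //= i; apply: aut_comp => //; exact: fnat_aut.
Qed.

Lemma tn_composable (t u : triple) : valid t -> valid u -> tp t = tm u -> tn t = tn u.
Proof. by move=> [_ [h _]] [h' _] e; rewrite -h -h' e. Qed.

Lemma tperm_tmul (t u : triple) : tn t = tn u -> forall i,
  val (tperm (tmul t u) i) = Defs.pnat (tperm t) (Defs.pnat (tperm u) i).
Proof.
case: t => am ap n s fs /= en; subst n; apply: mkperm_natE => [i hi|i j hi hj].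
  exact/pnat_ltn/pnat_ltn.
by move/pnat_inj => /(_ (pnat_ltn _ hi) (pnat_ltn _ hj)); apply: pnat_inj.
Qed.

Lemma aa_leaf (t : triple) xi i (hi : i < tn t) : valid t ->
  pref (nth [::] (leaves (tp t)) i) xi ->
  aa t xi = catb (nth [::] (leaves (tm t)) (tperm t (Ordinal hi)))
                 (aut_bd (tfs t (Ordinal hi)) (shift xi (size (nth [::] (leaves (tp t)) i)))).
Proof.
move=> [h1 [h2 _]] hp; rewrite /aa.
have -> : find (fun v => v == mkseq xi (size v)) (leaves (tp t)) = i.
  by apply: find_leaf => //; rewrite h2.
rewrite insubT /=; apply: functional_extensionality => m; rewrite /catb.
by case: ltnP => // h; exact: set_nth_default.
Qed.

Lemma leaf_pref_exists (t : triple) xi : valid t ->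
  exists i (hi : i < tn t), pref (nth [::] (leaves (tp t)) i) xi.
Proof.
move=> [_ [h2 _]]; case/hasP: (leaves_has_pref (tp t) xi) => w hw hp.
have hi : index w (leaves (tp t)) < tn t by rewrite -h2 index_mem.
by exists (index w (leaves (tp t))), hi; rewrite nth_index.
Qed.

Lemma aa_ident (T : dtree) : aa (ident T) = id.
Proof.
apply: functional_extensionality => xi.
case: (leaf_pref_exists xi (valid_ident T)) => i [hi hp].
by rewrite (aa_leaf hi (valid_ident T) hp) /= perm1 aut_bd_id catb_shift.
Qed.

Lemma aa_tmul (t u : triple) : valid t -> valid u -> tp t = tm u ->
  aa (tmul t u) = aa t \o aa u.
Proof.
move=> vt vu e; apply: functional_extensionality => xi /=.
have en := tn_composable vt vu e.
have vtu := valid_tmul vt vu e.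
have [hft hfu] := (vt.2.2, vu.2.2).
case: (leaf_pref_exists xi vu) => i [hi hp].
set j := tperm u (Ordinal hi).
have hj : (j : nat) < tn t by rewrite en.
rewrite (aa_leaf hi vu hp); set w := aut_bd _ _.
have hpj : pref (nth [::] (leaves (tp t)) j) (catb (nth [::] (leaves (tm u)) j) w).
  by rewrite e; apply: pref_catb.
rewrite (aa_leaf hj vt hpj) (aa_leaf (t := tmul t u) hi vtu hp) /= -e.
rewrite shift_catb /w aut_bd_comp //; congr (catb (nth _ _ _) (aut_bd _ _)).
  by rewrite tperm_tmul // (pnat_ord _ hi) (pnat_ord _ hj).
by rewrite (pnat_ord _ hi) (fnat_ord _ hj).
Qed.
End Triples.

Section CloningPermutation.
Variables (d n k : nat) (s r : nat -> nat).
Hypothesis d_gt0 : 0 < d.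
Hypothesis hk : k < n.
Hypothesis s_ltn : forall i, i < n -> s i < n.
Hypothesis s_inj : forall i j, i < n -> j < n -> s i = s j -> i = j.
Hypothesis r_ltn : forall x, x < d -> r x < d.
Hypothesis r_inj : forall x y, x < d -> y < d -> r x = r y -> x = y.

Definition clone_perm i := clone_nat d s k (block_nat d r k i).
Definition clone_shift j := if s j < s k then s j else s j + d.-1.
Definition clone_preimage i := if i < k then i else i - d.-1.

Lemma clone_perm_lt i : i < k -> clone_perm i = clone_shift i.
Proof. by move=> h; rewrite /clone_perm /block_nat /clone_nat (leqNgt k i) h /= h. Qed.

Lemma clone_perm_mid x : x < d -> clone_perm (k + x) = s k + r x.
Proof.
move=> h; rewrite /clone_perm /block_nat /clone_nat leq_addr ltn_add2l h /= addKn.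
have hr := r_ltn h.
have [-> ->] : (k + r x < k = false) /\ (k + r x < k + d) by lia.
by rewrite addKn.
Qed.

Lemma clone_perm_gt i : k + d <= i -> clone_perm i = clone_shift (i - d.-1).
Proof.
move=> h; rewrite /clone_perm /block_nat /clone_nat.
have [h1 h2 h3] : [/\ (k <= i < k + d) = false, (i < k) = false & (i < k + d) = false].
  by split; lia.
by rewrite h1 h2 h3.
Qed.

Lemma clone_perm_out i : ~~ (k <= i < k + d) ->
  clone_perm i = clone_shift (clone_preimage i).
Proof.
rewrite /clone_preimage; case: (ltnP i k) => h hi; first exact: clone_perm_lt.
by apply: clone_perm_gt; lia.
Qed.

Lemma clone_preimage_ltn i : i < n + d.-1 -> ~~ (k <= i < k + d) ->
  clone_preimage i < n /\ clone_preimage i != k.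
Proof. by rewrite /clone_preimage; case: (ltnP i k) => h hi hm; split; try apply/eqP; lia. Qed.

Lemma s_neq_sk j : j < n -> j != k -> s j != s k.
Proof. by move=> hj; apply: contraNneq => /s_inj ->. Qed.

Lemma clone_shift_ltn j : j < n -> clone_shift j < n + d.-1.
Proof. by move=> hj; have := s_ltn hj; rewrite /clone_shift; case: ifP; lia. Qed.

Lemma clone_shift_inj j j' : j < n -> j' < n -> j != k -> j' != k ->
  clone_shift j = clone_shift j' -> j = j'.
Proof.
move=> hj hj' /(s_neq_sk hj) /eqP a1 /(s_neq_sk hj') /eqP a2.
by rewrite /clone_shift => e; apply: s_inj => //; move: e; do 2 case: ifP; lia.
Qed.

Lemma clone_shift_neq_mid j x : j < n -> j != k -> x < d -> clone_shift j != s k + x.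
Proof.
move=> hj /(s_neq_sk hj) /eqP a hx; rewrite /clone_shift.
by case: ifP => h; apply/eqP; lia.
Qed.

Lemma clone_perm_ltn i : i < n + d.-1 -> clone_perm i < n + d.-1.
Proof.
move=> hi; case/boolP: (k <= i < k + d) => hm.
  have -> : i = k + (i - k) by lia.
  rewrite clone_perm_mid; last lia.
  by have := r_ltn (x := i - k) ltac:(lia); have := s_ltn hk; lia.
have [hj _] := clone_preimage_ltn hi hm.
by rewrite clone_perm_out // clone_shift_ltn.
Qed.

Lemma clone_perm_mid_neq a b : k <= a < k + d -> b < n + d.-1 -> ~~ (k <= b < k + d) ->
  clone_perm a != clone_perm b.
Proof.
move=> ha hb hm; have [hj hjk] := clone_preimage_ltn hb hm.
have -> : a = k + (a - k) by lia.
have hx : a - k < d by lia.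
by rewrite clone_perm_mid ?clone_perm_out // eq_sym clone_shift_neq_mid ?r_ltn.
Qed.

Lemma clone_perm_inj a b : a < n + d.-1 -> b < n + d.-1 -> clone_perm a = clone_perm b -> a = b.
Proof.
move=> ha hb e.
case/boolP: (k <= a < k + d) => ma; case/boolP: (k <= b < k + d) => mb.
- move: e; have -> : a = k + (a - k) by lia.
  have -> : b = k + (b - k) by lia.
  by rewrite !clone_perm_mid; try lia; move=> /addnI /r_inj; lia.
- by move: (clone_perm_mid_neq ma hb mb); rewrite e eqxx.
- by move: (clone_perm_mid_neq mb ha ma); rewrite e eqxx.
have [la na] := clone_preimage_ltn ha ma.
have [lb nb] := clone_preimage_ltn hb mb.
move: e; rewrite !clone_perm_out // => /(clone_shift_inj la lb na nb).
by rewrite /clone_preimage; case: (ltnP a k); case: (ltnP b k); lia.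
Qed.
End CloningPermutation.

Section Expansion.
Variable d : nat.
Hypothesis d_gt0 : 0 < d.
Local Notation triple := (triple d).
Local Notation tperm := Defs.tperm.
Local Notation tfs t := (@Defs.tfs _ t).

Variables (t : triple) (k : 'I_(tn t)).
Hypothesis vt : valid t.
Local Notation n := (tn t).
Local Notation s := (Defs.pnat (tperm t)).
Local Notation fk := (tfs t k).
Local Notation r := (rho_nat fk).
Local Notation t' := (@expand _ t k).
Local Notation M := (leaves (tm t)).
Local Notation L := (leaves (tp t)).

Lemma rho_natE (x : 'I_d) : r x = rho fk x.
Proof. by rewrite /rho_nat valK. Qed.

Lemma rho_nat_ltn x : x < d -> r x < d.
Proof. by move=> hx; rewrite /rho_nat insubT /=. Qed.

Lemma rho_nat_inj x y : x < d -> y < d -> r x = r y -> x = y.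
Proof.
move=> hx hy; rewrite /rho_nat !insubT /= => /val_inj /(aut_rho_inj (vt.2.2 k)).
by move/(congr1 val).
Qed.

Lemma tperm_expand (i : 'I_(tn t')) : val (tperm t' i) = clone_perm d k s r i.
Proof.
have hs := @pnat_ltn _ (tperm t); have si := @pnat_inj _ (tperm t).
rewrite /= mkperm_natE //.
  by move=> j; apply: (clone_perm_ltn d_gt0 (ltn_ord k) hs rho_nat_ltn).
by move=> a b; apply: (clone_perm_inj d_gt0 (ltn_ord k) si rho_nat_ltn rho_nat_inj).
Qed.

Lemma size_leaves_tm : size M = n. Proof. by case: vt. Qed.
Lemma size_leaves_tp : size L = n. Proof. by case: vt => _ []. Qed.

Lemma valid_expand : valid t'.
Proof.
have hsk : tperm t k < size M by rewrite size_leaves_tm.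
have hk : (k : nat) < size L by rewrite size_leaves_tp.
split; first by rewrite /= size_add_caret // size_leaves_tm.
split; first by rewrite /= size_add_caret // size_leaves_tp.
have hfs := vt.2.2; move=> i /=; case: ifP => _; first exact: fnat_aut.
by case: ifP => _; [exact: state_nat_aut|exact: fnat_aut].
Qed.

Lemma nth_tm_expand_shift j : j < n -> j != k ->
  nth [::] (leaves (tm t')) (clone_shift d k s j) = nth [::] M (s j).
Proof.
move=> hj hne; have hsk : tperm t k < size M by rewrite size_leaves_tm.
have := s_neq_sk (ltn_ord k) (@pnat_inj _ (tperm t)) hj hne; rewrite pnat_val => /eqP ne.
rewrite /clone_shift pnat_val; case: ltnP => h; first by rewrite nth_add_caret_lt.
by rewrite nth_add_caret_gt ?addnK //; lia.
Qed.

(* Away from the k-th leaf of T_+ expansion only reindexes leaves. *)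
Lemma aa_expand_off xi j (hj : j < n) : j != k ->
  pref (nth [::] L j) xi -> aa t' xi = aa t xi.
Proof.
move=> hjk hp; rewrite (aa_leaf hj vt hp).
have hk : (k : nat) < size L by rewrite size_leaves_tp.
pose j' := if j < k then j else j + d.-1.
have [hj' ej'] : j' < tn t' /\ clone_preimage d k j' = j.
  by rewrite /j' /clone_preimage /=; case: ifP; case: ifP; lia.
have hmid : ~~ (k <= j' < k + d) by rewrite /j'; case: ifP; lia.
have hp' : pref (nth [::] (leaves (tp t')) j') xi.
  rewrite /= /j'; case: ifP => h; first by rewrite nth_add_caret_lt.
  by rewrite nth_add_caret_gt ?addnK //; lia.
rewrite (aa_leaf hj' valid_expand hp') tperm_expand.
rewrite (clone_perm_out _ _ d_gt0 (ltn_ord k) hmid) ej' /=.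
rewrite nth_tm_expand_shift // (pnat_ord _ hj); congr catb.
have -> : nth [::] (leaves (add_caret (tp t) k)) j' = nth [::] L j.
  rewrite /j'; case: ifP => h; first by rewrite nth_add_caret_lt.
  by rewrite nth_add_caret_gt ?addnK //; lia.
rewrite /j'; case: (ltnP j k) => h; first by rewrite !h (fnat_ord _ hj).
have [-> ->] : (j + d.-1 < k = false) /\ (j + d.-1 < k + d = false) by lia.
by rewrite addnK (fnat_ord _ hj).
Qed.

(* Below the k-th leaf, f_k = rho(f_k)(f_k^1,...,f_k^d) is split along the new caret. *)
Lemma aa_expand_on xi : pref (nth [::] L k) xi -> aa t' xi = aa t xi.
Proof.
have hsk : tperm t k < size M by rewrite size_leaves_tm.
have hk : (k : nat) < size L by rewrite size_leaves_tp.
move=> hp; rewrite (aa_leaf (ltn_ord k) vt hp) (_ : Ordinal _ = k); last exact: val_inj.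
set v := nth [::] L k; set x : 'I_d := xi (size v).
have hi : k + x < tn t' by rewrite /=; have := ltn_ord x; have := ltn_ord k; lia.
have hp' : pref (nth [::] (leaves (tp t')) (k + x)) xi.
  by rewrite /= nth_add_caret_mid //; apply: pref_rcons.
rewrite (aa_leaf hi valid_expand hp') tperm_expand.
rewrite (clone_perm_mid _ d_gt0 (ltn_ord k) rho_nat_ltn) //=.
rewrite rho_natE pnat_val nth_add_caret_mid //.
have [-> ->] : (k + x < k = false) /\ (k + x < k + d) by have := ltn_ord x; lia.
rewrite addKn /state_nat valK size_rcons [in RHS](aut_bd_cons _ (vt.2.2 k)) catb_cat cats1 -/v.
have -> : shift xi (size v) 0 = x by rewrite /shift addn0.
congr catb; first exact: nth_add_caret_mid.
by congr (aut_bd _ _); apply: functional_extensionality => m; rewrite /shift addnA addn1.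
Qed.

Lemma aa_expand : aa t' = aa t.
Proof.
apply: functional_extensionality => xi.
case: (leaf_pref_exists xi vt) => j [hj hp].
case: (eqVneq j k) => [ejk|njk]; last exact: (aa_expand_off hj njk hp).
by apply: aa_expand_on; rewrite -ejk.
Qed.
End Expansion.

Section Refinement.
Variable d : nat.
Local Notation dtree := (dtree d).

Definition graft_step (a b : dtree) : Prop := exists2 u, u \in leaves a & b = graft a u.
Definition refines : dtree -> dtree -> Prop := clos_refl_trans dtree graft_step.

Definition ffun_set (h : {ffun 'I_d -> dtree}) x b := [ffun y => if y == x then b else h y].

Lemma refines_ffun_set a b : refines a b -> forall (h : {ffun 'I_d -> dtree}) x, h x = a ->
  refines (Nd h) (Nd (ffun_set h x b)).
Proof.
elim => {a b} [a b [u hu ->]|a|a b c _ IH1 _ IH2] h x hx.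
- apply: rt_step; exists (x :: u); first by rewrite mem_leaves_Nd hx.
  by congr Nd; apply/ffunP => y; rewrite !ffunE; case: eqP => // ->; rewrite hx.
- have -> : ffun_set h x a = h by apply/ffunP => y; rewrite ffunE; case: eqP => // ->.
  exact: rt_refl.
- apply: rt_trans (IH1 h x hx) _.
  have -> : ffun_set h x c = ffun_set (ffun_set h x b) x c.
    by apply/ffunP => y; rewrite !ffunE; case: eqP.
  by apply: IH2; rewrite ffunE eqxx.
Qed.

Lemma refines_Nd (f g : {ffun 'I_d -> dtree}) :
  (forall x, refines (f x) (g x)) -> refines (Nd f) (Nd g).
Proof.
move=> H; pose fg (s : seq 'I_d) := [ffun y => if y \in s then g y else f y].
have -> : g = fg (enum 'I_d) by apply/ffunP => y; rewrite ffunE mem_enum.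
elim: (enum 'I_d) => [|x s IH].
  have -> : fg [::] = f by apply/ffunP => y; rewrite ffunE.
  exact: rt_refl.
case hx : (x \in s).
  have -> // : fg (x :: s) = fg s.
  by apply/ffunP => y; rewrite !ffunE inE; case: eqP => // ->; rewrite hx.
apply: rt_trans IH _.
have -> : fg (x :: s) = ffun_set (fg s) x (g x).
  by apply/ffunP => y; rewrite !ffunE inE; case: eqP => // ->; rewrite hx.
by apply: refines_ffun_set; rewrite ?ffunE ?hx.
Qed.

Lemma Lf_refines (T : dtree) : refines (Lf d) T.
Proof.
elim/dtree_indf: T => [|g IH]; first exact: rt_refl.
apply: (@rt_trans _ _ _ (Nd [ffun _ => Lf d])); first by apply: rt_step; exists [::].
by apply: refines_Nd => x; rewrite ffunE.
Qed.

Fixpoint dtree_join (a b : dtree) : dtree :=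
  match a, b with
  | Lf, _ => b
  | _, Lf => a
  | Nd f, Nd g => Nd [ffun x => dtree_join (f x) (g x)]
  end.

Lemma refines_joinl a b : refines a (dtree_join a b).
Proof.
elim/dtree_indf: a b => [|f IH] [|g]; try exact: Lf_refines; first exact: rt_refl.
by apply: refines_Nd => x; rewrite ffunE.
Qed.

Lemma refines_joinr a b : refines b (dtree_join a b).
Proof.
elim/dtree_indf: a b => [|f IH] [|g]; try exact: rt_refl; first exact: Lf_refines.
by apply: refines_Nd => x; rewrite ffunE.
Qed.
End Refinement.

Section Inverse.
Variable d : nat.
Local Notation triple := (triple d).
Local Notation tperm := Defs.tperm.
Local Notation tfs t := (@Defs.tfs _ t).

(* The inverse triple is (T_+, sigma^-1 (f_{sigma^-1(i)}^-1), T_-). *)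
Lemma tinv_exists (t : triple) : valid t -> exists s : triple,
  [/\ valid s, tm s = tp t, tp s = tm t, aa t \o aa s = id & aa s \o aa t = id].
Proof.
move=> vt; have hfs := vt.2.2.
pose ginv i := proj1_sig (constructive_indefinite_description _ (aut_inverse (hfs i))).
have ginvP i : [/\ is_aut (ginv i), cancel (tfs t i) (ginv i) & cancel (ginv i) (tfs t i)].
  by rewrite /ginv; case: constructive_indefinite_description.
pose s := Triple (tp t) (tm t) (tperm t)^-1%g (fun i => ginv ((tperm t)^-1%g i)).
have vs : valid s.
  by split; [exact: vt.2.1|split; [exact: vt.1|move=> i; have [] := ginvP ((tperm t)^-1%g i)]].
exists s; split => //; apply: functional_extensionality => xi /=.
- case: (leaf_pref_exists xi vs) => j [hj hp]; rewrite (aa_leaf hj vs hp) /=.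
  set i := ((tperm t)^-1)%g (Ordinal hj); have [ga _ gf] := ginvP i.
  rewrite (aa_leaf (ltn_ord i) vt (pref_catb _ _)) (_ : Ordinal _ = i); last exact: val_inj.
  rewrite shift_catb aut_bd_comp //.
  have -> : tfs t i \o ginv i = id := functional_extensionality _ _ gf.
  by rewrite aut_bd_id /i permKV catb_shift.
- case: (leaf_pref_exists xi vt) => j [hj hp]; rewrite (aa_leaf hj vt hp) /=.
  set i := tperm t (Ordinal hj); have [ga fg _] := ginvP (Ordinal hj).
  rewrite (aa_leaf (t := s) (ltn_ord i) vs (pref_catb _ _)).
  rewrite (_ : Ordinal (ltn_ord i) = i) /=; last exact: val_inj.
  rewrite shift_catb /i permK aut_bd_comp //.
  have -> : ginv (Ordinal hj) \o tfs t (Ordinal hj) = id := functional_extensionality _ _ fg.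
  by rewrite aut_bd_id catb_shift.
Qed.
End Inverse.

Section Classes.
Variable d : nat.
Hypothesis d_gt1 : 1 < d.
Local Notation triple := (triple d).
Local Notation dtree := (dtree d).
Local Notation tperm := Defs.tperm.

Let d_gt0 : 0 < d := ltnW d_gt1.

Lemma tequiv_valid (a b : triple) : tequiv a b -> valid a <-> valid b.
Proof.
elim => {a b} [a b [va [k ->]]|a|a b _ IH|a b c _ IH1 _ IH2] //.
- by split => // _; apply: valid_expand.
- by rewrite IH.
- by rewrite IH1 IH2.
Qed.

Lemma tequiv_aa (a b : triple) : tequiv a b -> valid a -> aa a = aa b.
Proof.
elim => {a b} [a b [va [k ->]]|a|a b ab IH|a b c ab IH1 _ IH2] v //.
- by rewrite aa_expand.
- by apply/esym/IH; rewrite (tequiv_valid ab).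
- by rewrite IH1 // IH2 // -(tequiv_valid ab).
Qed.

Lemma tequiv_refine_tp (t : triple) T : valid t -> refines (tp t) T ->
  exists t', tequiv t t' /\ tp t' = T.
Proof.
move ea: (tp t) => a vt /clos_rt_rt1n_iff H.
elim: H t vt ea => {a T} [a|a b c [u hu ->] _ IH] t vt ea.
  by exists t; split; [apply: rst_refl|].
subst a; have hk : index u (leaves (tp t)) < tn t by rewrite -size_leaves_tp // index_mem.
pose k : 'I_(tn t) := Ordinal hk.
have et : tp (@expand _ t k) = graft (tp t) u by rewrite /= /add_caret nth_index.
case: (IH _ (valid_expand d_gt0 k vt) et) => t' [e1 e2]; exists t'; split => //.
by apply: rst_trans e1; apply: rst_step; split => //; exists k.
Qed.

Lemma tequiv_refine_tm (t : triple) T : valid t -> refines (tm t) T ->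
  exists t', tequiv t t' /\ tm t' = T.
Proof.
move ea: (tm t) => a vt /clos_rt_rt1n_iff H.
elim: H t vt ea => {a T} [a|a b c [u hu ->] _ IH] t vt ea.
  by exists t; split; [apply: rst_refl|].
subst a; have hj : index u (leaves (tm t)) < tn t by rewrite -size_leaves_tm // index_mem.
pose k : 'I_(tn t) := ((tperm t)^-1 (Ordinal hj))%g.
have et : tm (@expand _ t k) = graft (tm t) u by rewrite /= /add_caret permKV /= nth_index.
case: (IH _ (valid_expand d_gt0 k vt) et) => t' [e1 e2]; exists t'; split => //.
by apply: rst_trans e1; apply: rst_step; split => //; exists k.
Qed.

Lemma tequiv_composable (t u : triple) : valid t -> valid u ->
  exists t' u', [/\ tequiv t t', tequiv u u' & tp t' = tm u'].
Proof.
move=> vt vu.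
case: (tequiv_refine_tp vt (refines_joinl (tp t) (tm u))) => t' [e1 p1].
case: (tequiv_refine_tm vu (refines_joinr (tp t) (tm u))) => u' [e2 p2].
by exists t', u'; rewrite p1 p2.
Qed.

(* On the cone below the i-th leaf of T_+ the two maps read u_sigma(i) f_i(w),
   so rigidity recovers T_-, sigma and the f_i. *)
Lemma triple_eq_of_aa (a b : triple) : valid a -> valid b -> tp a = tp b -> aa a = aa b -> a = b.
Proof.
case: a => am ap an sa fa; case: b => bm bp bn sb fb va vb /= ep eaa; subst bp.
have en : an = bn by rewrite -[an](size_leaves_tp va) -[bn](size_leaves_tp vb).
subst bn; set A := Triple am ap sa fa; set B := Triple bm ap sb fb.
have key (i : 'I_an) : nth [::] (leaves am) (sa i) = nth [::] (leaves bm) (sb i) /\ fa i =1 fb i.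
  apply: (catb_aut_bd_inj d_gt1 (va.2.2 i) (vb.2.2 i)) => e.
  set v := nth [::] (leaves ap) i; have := congr1 (fun h => h (catb v e)) eaa => /=.
  rewrite (aa_leaf (t := A) (ltn_ord i) va (pref_catb v e)).
  rewrite (aa_leaf (t := B) (ltn_ord i) vb (pref_catb v e)).
  by rewrite /= shift_catb (_ : Ordinal _ = i) //; apply: val_inj.
have [hsa hsb] := (size_leaves_tm va, size_leaves_tm vb).
have nth_perm (L : seq (word d)) (s : {perm 'I_an}) w :
    size L = an -> w \in L -> exists i, w = nth [::] L (s i).
  move=> hs hw; have hj : index w L < an by rewrite -hs index_mem.
  by exists ((s^-1)%g (Ordinal hj)); rewrite permKV nth_index.
have emb : am = bm.
  apply: leaves_inj => w; apply/idP/idP => hw.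
    by have [i ->] := nth_perm _ sa w hsa hw; rewrite (key i).1 mem_nth ?hsb.
  by have [i ->] := nth_perm _ sb w hsb hw; rewrite -(key i).1 mem_nth ?hsa.
subst bm; have esab : sa = sb.
  apply/permP => i; apply: val_inj; have /eqP := (key i).1.
  by rewrite nth_uniq ?hsa ?ltn_ord ?leaves_uniq // => /eqP.
subst sb; have efab : fa = fb.
  by apply: functional_extensionality => i; apply: functional_extensionality; apply: (key i).2.
by subst fb.
Qed.

Lemma tequiv_of_aa (t t' : triple) : valid t -> valid t' -> aa t = aa t' -> tequiv t t'.
Proof.
move=> vt vt' e.
case: (tequiv_refine_tp vt (refines_joinl (tp t) (tp t'))) => t1 [e1 p1].
case: (tequiv_refine_tp vt' (refines_joinr (tp t) (tp t'))) => t2 [e2 p2].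
have [v1 v2] : valid t1 /\ valid t2 by rewrite -(tequiv_valid e1) -(tequiv_valid e2).
have e12 : t1 = t2.
  apply: triple_eq_of_aa; rewrite ?p1 ?p2 //.
  by rewrite -(tequiv_aa e1 vt) -(tequiv_aa e2 vt') e.
by apply: rst_trans e1 _; rewrite e12; apply: rst_sym.
Qed.

Lemma tmul_tequiv (t t' u u' : triple) : valid t -> valid u ->
  tequiv t t' -> tequiv u u' -> tp t = tm u -> tp t' = tm u' ->
  tequiv (tmul t u) (tmul t' u').
Proof.
move=> vt vu et eu p p'.
have [vt' vu'] : valid t' /\ valid u' by rewrite -(tequiv_valid et) -(tequiv_valid eu).
apply: tequiv_of_aa; try exact: valid_tmul.
by rewrite !aa_tmul // (tequiv_aa et vt) (tequiv_aa eu vu).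
Qed.

Lemma tmulA_tequiv (t u v : triple) : valid t -> valid u -> valid v ->
  tp t = tm u -> tp u = tm v -> tequiv (tmul (tmul t u) v) (tmul t (tmul u v)).
Proof.
move=> vt vu vv p q; have [vtu vuv] := (valid_tmul vt vu p, valid_tmul vu vv q).
by apply: tequiv_of_aa; rewrite ?aa_tmul //; apply: valid_tmul.
Qed.

Lemma ident_tequiv (T U : dtree) : tequiv (ident T) (ident U).
Proof. by apply: tequiv_of_aa; rewrite ?aa_ident //; apply: valid_ident. Qed.

Lemma tmul1t_tequiv (t : triple) : valid t -> tequiv (tmul (ident (tm t)) t) t.
Proof.
move=> vt; have vI := valid_ident (tm t).
by apply: tequiv_of_aa; rewrite ?aa_tmul ?aa_ident //; apply: valid_tmul.
Qed.

Lemma tmult1_tequiv (t : triple) : valid t -> tequiv (tmul t (ident (tp t))) t.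
Proof.
move=> vt; have vI := valid_ident (tp t).
by apply: tequiv_of_aa; rewrite ?aa_tmul ?aa_ident //; apply: valid_tmul.
Qed.

Lemma tmulV_tequiv (t : triple) : valid t -> exists s : triple,
  [/\ valid s, tm s = tp t, tp s = tm t,
      tequiv (tmul t s) (ident (tm t)) & tequiv (tmul s t) (ident (tp t))].
Proof.
move=> vt; have [s [vs ems eps ts st]] := tinv_exists vt.
exists s; split => //; apply: tequiv_of_aa;
  rewrite ?aa_tmul ?aa_ident //; (apply: valid_tmul || apply: valid_ident) => //.
Qed.
End Classes.

Theorem mainTheorem1 (d : nat) (Hd : 1 < d) :
  (forall t u : triple d, valid t -> valid u ->
     exists t' u', tequiv t t' /\ tequiv u u' /\ tp t' = tm u') /\
  (forall t u : triple d, valid t -> valid u -> tp t = tm u -> valid (tmul t u)) /\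
  (forall t t' u u' : triple d, valid t -> valid u ->
     tequiv t t' -> tequiv u u' -> tp t = tm u -> tp t' = tm u' ->
     tequiv (tmul t u) (tmul t' u')) /\
  (forall t u v : triple d, valid t -> valid u -> valid v ->
     tp t = tm u -> tp u = tm v ->
     tequiv (tmul (tmul t u) v) (tmul t (tmul u v))) /\
  (forall T : dtree d, tequiv (ident T) (ident (Lf d))) /\
  (forall t : triple d, valid t ->
     tequiv (tmul (ident (tm t)) t) t /\ tequiv (tmul t (ident (tp t))) t) /\
  (forall t : triple d, valid t -> exists s : triple d, valid s /\
     tm s = tp t /\ tp s = tm t /\
     tequiv (tmul t s) (ident (tm t)) /\ tequiv (tmul s t) (ident (tp t))) /\
  (forall t t' : triple d, valid t -> tequiv t t' -> forall xi, aa t xi =1 aa t' xi) /\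
  (forall t u : triple d, valid t -> valid u -> tp t = tm u ->
     forall xi, aa (tmul t u) xi =1 aa t (aa u xi)) /\
  (forall t t' : triple d, valid t -> valid t' ->
     (forall xi, aa t xi =1 aa t' xi) -> tequiv t t') /\
  (forall h : bdry d -> bdry d, is_AAut h ->
     exists t, valid t /\ forall xi, h xi =1 aa t xi).
Proof.
split; first by move=> t u vt vu; have [t' [u' []]] := tequiv_composable Hd vt vu; exists t', u'.
split; first exact: valid_tmul.
split; first exact: tmul_tequiv.
split; first exact: tmulA_tequiv.
split; first by move=> T; apply: ident_tequiv.
split; first by move=> t vt; split; [apply: tmul1t_tequiv|apply: tmult1_tequiv].
split; first by move=> t /(tmulV_tequiv Hd) [s [? ? ? ? ?]]; exists s.
split; first by move=> t t' vt e xi; rewrite (tequiv_aa Hd e vt).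
split; first by move=> t u vt vu p xi; rewrite aa_tmul.
split; last by [].
move=> t t' vt vt' H; apply: tequiv_of_aa => //.
by do 2 apply: functional_extensionality => ?; apply: H.
Qed.
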